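(* Fix widths $\mathbf{n}=(n_0,\dots,n_L)$, piecewise differentiable $h_1,\dots,h_L:\mathbb{R}\to\mathbb{R}$, a finite batch $\{(x_j,y_j)\}\subseteq\mathbb{R}^{n_0}\times\mathbb{R}^{n_L}$ and a cost function $\mathcal C$, and let $\mathcal L,\mathcal L_{\rm red},\iota_1,q_1,\iota_2,q_2,\iota$ be as in the context. Then: (1) $\iota=\iota_1\circ\iota_2$ and $\mathcal L\circ\iota=\mathcal L_{\rm red}$; (2) $\mathcal L\circ\iota_1=\mathcal L_{\rm red}\circ q_2$ on $\mathsf{Param}^{\rm int}(\mathbf{n})$; (3) for every $\mathbf{T}\in\mathsf{Param}^{\rm int}(\mathbf{n})$, $q_1\big(\nabla_{\iota_1(\mathbf{T})}\mathcal L\big)=\iota_2\big(\nabla_{q_2(\mathbf{T})}\mathcal L_{\rm red}\big)$.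
   Context: Merged notation: $\mathsf{Param}(\mathbf{n})=\prod_{i=1}^L\mathbb{R}^{n_i\times(n_{i-1}+1)}$, $\mathbf{A}=(A_i)$. Reduced widths: $n^{\rm red}_0=n_0$, $n^{\rm red}_i=\min(n_i,n^{\rm red}_{i-1}+1)$ for $1\le i\le L-1$, $n^{\rm red}_L=n_L$. For $h:\mathbb{R}\to\mathbb{R}$, $h^{(k)}(v)=h(|v|)v/|v|$ ($v\ne0$), $h^{(k)}(0)=0$. With $\rho_i=h_i^{(n_i)}$, the feedforward function of $\mathbf{A}$ is $F=F_L$, $F_0=\mathrm{id}$, $F_i(x)=\rho_i\big(A_i\,(1,F_{i-1}(x))\big)$, where $(1,v)\in\mathbb{R}^{1+n_{i-1}}$ prepends a 1. $\mathcal L(\mathbf{A})=\sum_j\mathcal C(F(x_j),y_j)$; $\mathcal L_{\rm red}$ on $\mathsf{Param}(\mathbf{n}^{\rm red})$ is defined the same way using $\rho^{\rm red}_i=h_i^{(n^{\rm red}_i)}$. The losses are assumed differentiable so gradients exist. $\mathsf{Param}^{\rm int}(\mathbf{n})$ is the subspace of $\mathbf{T}=(T_i)$ with the bottom-left $(n_i-n^{\rm red}_i)\times(1+n^{\rm red}_{i-1})$ block of each $T_i$ zero. $\iota_1:\mathsf{Param}^{\rm int}(\mathbf{n})\hookrightarrow\mathsf{Param}(\mathbf{n})$ is the inclusion; $q_1:\mathsf{Param}(\mathbf{n})\to\mathsf{Param}^{\rm int}(\mathbf{n})$ zeroes out that block in each $A_i$. $\iota_2:\mathsf{Param}(\mathbf{n}^{\rm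 red})\to\mathsf{Param}^{\rm int}(\mathbf{n})$ pads each $B_i$ with $n_i-n^{\rm red}_i$ zero rows at the bottom and $n_{i-1}-n^{\rm red}_{i-1}$ zero columns at the right, i.e. $B_i\mapsto\begin{bmatrix}B_i&0\\0&0\end{bmatrix}$; $q_2:\mathsf{Param}^{\rm int}(\mathbf{n})\to\mathsf{Param}(\mathbf{n}^{\rm red})$ extracts the top-left $n^{\rm red}_i\times(1+n^{\rm red}_{i-1})$ block of each $T_i$. $\iota:\mathsf{Param}(\mathbf{n}^{\rm red})\hookrightarrow\mathsf{Param}(\mathbf{n})$ places each $B_i$ in the top-left corner of an $n_i\times(1+n_{i-1})$ zero matrix. *)

From HB Require Import structures.
From mathcomp Require Import all_boot all_order all_algebra.
From mathcomp Require Import all_classical all_reals all_analysis.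

Set Implicit Arguments.
Unset Strict Implicit.
Unset Printing Implicit Defensive.
Import Order.TTheory GRing.Theory Num.Theory.
Local Open Scope ring_scope.

Section Defs.
Variable R : realType.

Definition mget {p q} (M : 'M[R]_(p, q)) (r c : nat) : R :=
  match (insub r : option 'I_p), (insub c : option 'I_q) with
  | Some r', Some c' => M r' c'
  | _, _ => 0
  end.

Definition vcast {p q} (v : 'cV[R]_p) : 'cV[R]_q := \col_(i < q) mget v i 0.

Definition vnorm {p} (v : 'cV[R]_p) : R := Num.sqrt (\sum_i v i 0 ^+ 2).

Definition radial (h : R -> R) {p} (v : 'cV[R]_p) : 'cV[R]_p :=
  if v == 0 then 0 else (h (vnorm v) / vnorm v) *: v.

Definition prepend1 {q} (v : 'cV[R]_q) : 'cV[R]_(q.+1) :=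
  \col_(j < q.+1) (if (j : nat) == 0%N then 1 else mget v j.-1 0).

(* Param(m) = prod_{i=1}^L R^{m_i x (m_{i-1}+1)}; the ordinal k : 'I_L
   stands for the layer i = k+1. *)
Definition Param (L : nat) (m : nat -> nat) :=
  forall k : 'I_L, 'M[R]_(m k.+1, (m k).+1).

Definition Anat L m (A : Param L m) (k : nat) : 'M[R]_(m k.+1, (m k).+1) :=
  match (insub k : option 'I_L) with
  | Some o => \matrix_(r, c) mget (A o) r c
  | None => 0
  end.

Fixpoint ff L m (hs : nat -> R -> R) (A : Param L m) (k : nat)
  : 'cV[R]_(m 0%N) -> 'cV[R]_(m k) :=
  match k as k0 return 'cV[R]_(m 0%N) -> 'cV[R]_(m k0) with
  | 0%N => fun x => x
  | k'.+1 => fun x => radial (hs k'.+1) (Anat A k' *m prepend1 (ff hs A k' x))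
  end.

Fixpoint nred_aux (n : nat -> nat) (i : nat) : nat :=
  match i with
  | 0%N => n 0%N
  | i'.+1 => minn (n i) (nred_aux n i').+1
  end.

Definition nred (L : nat) (n : nat -> nat) (i : nat) : nat :=
  match i with
  | 0%N => n 0%N
  | _.+1 => if i == L then n L else nred_aux n i
  end.

(* loss sum_j C(F(x_j), y_j) of a network with widths m (m_0 = n_0, m_L = n_L;
   vcast only transports vectors between these equal dimensions) *)
Definition loss L (n m : nat -> nat) (hs : nat -> R -> R)
  (C : 'cV[R]_(n L) -> 'cV[R]_(n L) -> R)
  (data : seq ('cV[R]_(n 0%N) * 'cV[R]_(n L))) (A : Param L m) : R :=
  \sum_(d <- data) C (vcast (ff hs A L (vcast d.1))) d.2.

Definition pert L m (A : Param L m) (k : 'I_L) (r c : nat) (t : R) : Param L m :=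
  fun k' => A k' + \matrix_(r', c')
     (if (k' == k) && ((r' : nat) == r) && ((c' : nat) == c) then t else 0).

(* gradient (w.r.t. the Frobenius inner product) = matrix of partial derivatives *)
Definition grad L m (F : Param L m -> R) (A : Param L m) : Param L m :=
  fun k => \matrix_(r, c) derive1 (fun t => F (pert A k r c t)) 0.

Definition padd L m (A B : Param L m) : Param L m := fun k => A k + B k.
Definition pdot L m (A B : Param L m) : R :=
  \sum_(k : 'I_L) \sum_r \sum_c A k r c * B k r c.
Definition pnorm L m (A : Param L m) : R :=
  \sum_(k : 'I_L) \sum_r \sum_c `|A k r c|.

Definition param_differentiable L m (F : Param L m -> R) (A : Param L m) : Prop :=
  exists G : Param L m, forall eps : R, 0 < eps -> exists2 delta : R, 0 < delta &
    forall D : Param L m, pnorm D < delta ->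
      `|F (padd A D) - F A - pdot G D| <= eps * pnorm D.

Definition piecewise_differentiable (h : R -> R) : Prop :=
  exists s : seq R, forall x : R, x \notin s -> derivable h x 1.

Definition is_int L n (T : Param L n) : Prop :=
  forall (k : 'I_L) (r : 'I_(n k.+1)) (c : 'I_((n k).+1)),
    (nred L n k.+1 <= r)%N -> (c <= nred L n k)%N -> T k r c = 0.

Definition ParamInt L n := {T : Param L n | is_int T}.

Definition iota_red L n (B : Param L (nred L n)) : Param L n :=
  fun k => \matrix_(r, c) mget (B k) r c.

Definition iota1 L n (T : ParamInt L n) : Param L n := proj1_sig T.

Definition pad L n (B : Param L (nred L n)) : Param L n :=
  fun k => \matrix_(r, c) mget (B k) r c.

Lemma pad_is_int L n (B : Param L (nred L n)) : is_int (pad B).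
Proof.
move=> k r c hr _; rewrite /pad mxE /mget.
by rewrite insubN // -leqNgt.
Qed.

Definition iota2 L n (B : Param L (nred L n)) : ParamInt L n :=
  exist _ (pad B) (pad_is_int B).

Definition zero_block L n (A : Param L n) : Param L n :=
  fun k => \matrix_(r, c)
    (if (nred L n k.+1 <= r)%N && (c <= nred L n k)%N then 0 else A k r c).

Lemma zero_block_is_int L n (A : Param L n) : is_int (zero_block A).
Proof. by move=> k r c hr hc; rewrite /zero_block mxE hr hc. Qed.

Definition q1 L n (A : Param L n) : ParamInt L n :=
  exist _ (zero_block A) (zero_block_is_int A).

Definition q2 L n (T : ParamInt L n) : Param L (nred L n) :=
  fun k => \matrix_(r, c) mget (proj1_sig T k) r c.

End Defs.

From HB Require Import structures.
From mathcomp Require Import all_boot all_order all_algebra.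
From mathcomp Require Import all_classical all_reals all_analysis.
Import Order.TTheory GRing.Theory Num.Theory.
Local Open Scope ring_scope.

Set Implicit Arguments.
Unset Strict Implicit.
Unset Printing Implicit Defensive.

(** Read all weights and activations as zero-padded infinite arrays. If a
    network A agrees with a narrower network B on the bias column and on every
    column fed by a neuron of B, then by induction on the layers the neurons of
    A outside B stay zero (their rows see only zero weights on B's neurons, and
    the radial activation maps 0 to 0) and the others carry B's values; so A and
    B have the same loss. Both iota(B) and any T in Param^int extend the reduced
    network (B, resp. q2 T). For (3), each entry of the gradient is the
    derivative of the loss along one coordinate: inside the reduced block the
    perturbed networks still extend each other, and in a column beyond the
    reduced width the perturbation only meets a silent neuron, so the loss is
    constant along it. *)

Section MatrixEntries.
Variable R : realType.
Implicit Types (p q : nat) (r c j : nat).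

Lemma mget_ord p q (M : 'M[R]_(p, q)) (i : 'I_p) (k : 'I_q) : mget M i k = M i k.
Proof. by rewrite /mget !valK. Qed.

Lemma mget_out p q (M : 'M[R]_(p, q)) r c :
  ~~ ((r < p) && (c < q))%N -> mget M r c = 0.
Proof.
rewrite negb_and /mget => /orP[rp|cq]; first by rewrite insubN.
by case: insub => // ?; rewrite insubN.
Qed.

Lemma mget_mx p q (f : nat -> nat -> R) r c :
  mget (\matrix_(i < p, k < q) f i k) r c = if ((r < p) && (c < q))%N then f r c else 0.
Proof.
rewrite /mget; case: insubP => [i _ <-|/negbTE->] //=.
by case: insubP => [k _ <-|/negbTE->]; rewrite ?mxE ?ltn_ord ?andbF.
Qed.

Lemma mget0 p q r c : mget (0 : 'M[R]_(p, q)) r c = 0.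
Proof. by rewrite /mget; case: insub => [i|] //; case: insub => [k|] //; rewrite mxE. Qed.

Lemma mgetD p q (M N : 'M[R]_(p, q)) r c : mget (M + N) r c = mget M r c + mget N r c.
Proof.
by rewrite /mget; case: insub => [i|]; rewrite ?addr0 //; case: insub => [k|]; rewrite ?mxE ?addr0.
Qed.

Lemma mgetZ p q a (M : 'M[R]_(p, q)) r c : mget (a *: M) r c = a * mget M r c.
Proof.
by rewrite /mget; case: insub => [i|]; rewrite ?mulr0 //; case: insub => [k|]; rewrite ?mxE ?mulr0.
Qed.

Lemma mget_mulmx p q N (M : 'M[R]_(p, q)) (v : 'cV[R]_q) j : (q <= N)%N ->
  mget (M *m v) j 0 = \sum_(i < N) mget M j i * mget v i 0.
Proof.
move=> qN; have [jp|pj] := ltnP j p; last first.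
  rewrite mget_out ?ltnNge ?pj // big1 // => i _.
  by rewrite mget_out ?mul0r // ltnNge pj.
rewrite (mget_ord _ (Ordinal jp) 0) mxE.
under eq_bigr => i _ do rewrite -(mget_ord M (Ordinal jp)) -(mget_ord v _ 0).
rewrite (big_ord_widen _ (fun i => mget M j i * mget v i 0) qN) big_mkcond /=.
apply: eq_bigr => i _; case: ltnP => // qi.
by rewrite [mget v _ _]mget_out ?mulr0 // ltnNge qi.
Qed.

Lemma mget_prepend1_0 q (v : 'cV[R]_q) : mget (prepend1 v) 0 0 = 1.
Proof. by rewrite (mget_mx _ _ (fun i _ => if i == 0%N then 1 else mget v i.-1 0)). Qed.

Lemma mget_prepend1S q (v : 'cV[R]_q) j : mget (prepend1 v) j.+1 0 = mget v j 0.
Proof.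
rewrite (mget_mx _ _ (fun i _ => if i == 0%N then 1 else mget v i.-1 0)) /= ltnS andbT.
by case: ltnP => // qj; rewrite mget_out // ltnNge qj.
Qed.

Lemma mget_vcast p q (v : 'cV[R]_p) j :
  mget (@vcast R p q v) j 0 = if (j < q)%N then mget v j 0 else 0.
Proof. by rewrite (mget_mx _ _ (fun i _ => mget v i 0)) andbT. Qed.

End MatrixEntries.

Section PaddedVectors.
Variable R : realType.
Implicit Types (p q : nat).

Definition eq_padded p q (u : 'cV[R]_p) (w : 'cV[R]_q) : Prop :=
  forall j : nat, mget u j 0 = mget w j 0.

Lemma vnorm_mget p N (u : 'cV[R]_p) : (p <= N)%N ->
  vnorm u = Num.sqrt (\sum_(i < N) mget u i 0 ^+ 2).
Proof.
move=> pN; rewrite /vnorm; under eq_bigr => i _ do rewrite -(mget_ord u _ 0).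
rewrite (big_ord_widen _ (fun i => mget u i 0 ^+ 2) pN) big_mkcond /=.
congr Num.sqrt; apply: eq_bigr => i _; case: ltnP => // pi.
by rewrite mget_out ?expr0n // ltnNge pi.
Qed.

Lemma col_eq0P p (u : 'cV[R]_p) : reflect (forall j, mget u j 0 = 0) (u == 0).
Proof.
apply: (iffP eqP) => [-> j|u0]; first exact: mget0.
by apply/matrixP => i k; rewrite ord1 -(mget_ord u i 0) u0 mxE.
Qed.

Lemma radial_eq_padded (h : R -> R) p q (u : 'cV[R]_p) (w : 'cV[R]_q) :
  eq_padded u w -> eq_padded (radial h u) (radial h w).
Proof.
move=> uw j; have norm_uw : vnorm u = vnorm w.
  rewrite (vnorm_mget u (leq_addr q p)) (vnorm_mget w (leq_addl p q)).
  by congr Num.sqrt; apply: eq_bigr => i _; rewrite uw.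
have zero_uw : (u == 0) = (w == 0).
  by apply/col_eq0P/col_eq0P => z i; [rewrite -uw | rewrite uw].
rewrite /radial zero_uw; case: (w == 0); first by rewrite !mget0.
by rewrite !mgetZ norm_uw uw.
Qed.

Lemma mget_mulmx_eq p q p' q' (M : 'M[R]_(p, q)) (u : 'cV[R]_q)
    (M' : 'M[R]_(p', q')) (u' : 'cV[R]_q') j :
  (forall i, mget M j i * mget u i 0 = mget M' j i * mget u' i 0) ->
  mget (M *m u) j 0 = mget (M' *m u') j 0.
Proof.
move=> terms; rewrite (mget_mulmx _ _ _ (leq_addr q' q)) (mget_mulmx _ _ _ (leq_addl q q')).
by apply: eq_bigr => i _; apply: terms.
Qed.

End PaddedVectors.

Section NetworkExtension.
Variables (R : realType) (L : nat).
Implicit Types (m : nat -> nat) (r c : nat).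

Definition extends_net m m' (A : Param R L m) (B : Param R L m') : Prop :=
  forall (k : 'I_L) r c, (c <= m' k)%N -> mget (A k) r c = mget (B k) r c.

Lemma mget_Anat m (A : Param R L m) (k : 'I_L) r c : mget (Anat A k) r c = mget (A k) r c.
Proof.
rewrite /Anat valK (mget_mx _ _ (mget (A k))).
by case: ifP => // /negbT /mget_out ->.
Qed.

Lemma ff_extends m m' hs (A : Param R L m) (B : Param R L m') x x' :
  extends_net A B -> eq_padded x x' ->
  forall k, (k <= L)%N -> eq_padded (ff hs A k x) (ff hs B k x').
Proof.
move=> AB xx'; elim=> [|k IHk] // kL /=.
have {}IHk := IHk (ltnW kL).
apply: radial_eq_padded => j; apply: mget_mulmx_eq => -[|i].
  by rewrite !mget_prepend1_0 !(mget_Anat _ (Ordinal kL)) AB.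
rewrite !mget_prepend1S !(mget_Anat _ (Ordinal kL)).
have [ik|ki] := ltnP i (m' k); first by rewrite AB // IHk.
by rewrite IHk [mget (ff _ _ _ _) _ _]mget_out ?mulr0 // ltnNge ki.
Qed.

Lemma loss_extends n m m' hs C data (A : Param R L m) (B : Param R L m') :
  m' 0%N = m 0%N -> extends_net A B -> @loss R L n m hs C data A = @loss R L n m' hs C data B.
Proof.
move=> m'0 AB; apply: eq_bigr => d _; congr C; apply/matrixP => i o; rewrite !mxE.
by apply: (ff_extends hs AB) => // j; rewrite !mget_vcast m'0.
Qed.

Lemma mget_pert m (A : Param R L m) k0 r0 c0 t (k : 'I_L) r c :
  mget (pert A k0 r0 c0 t k) r c = mget (A k) r c +
    (if [&& (r < m k.+1)%N, (c < (m k).+1)%N, k == k0, r == r0 & c == c0] then t else 0).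
Proof.
rewrite mgetD (mget_mx _ _ (fun r' c' => if (k == k0) && (r' == r0) && (c' == c0) then t else 0)).
by congr (_ + _); case: (r < _)%N; case: (c < _)%N; rewrite /= ?andbA.
Qed.

Lemma extends_pert m m' (A : Param R L m) (B : Param R L m') (k0 : 'I_L) r0 c0 t :
  (forall i, m' i <= m i)%N -> (r0 < m' k0.+1)%N ->
  extends_net A B -> extends_net (pert A k0 r0 c0 t) (pert B k0 r0 c0 t).
Proof.
move=> m'm r0k0 AB k r c ck; rewrite !mget_pert AB //; congr (_ + _).
have ck' : (c < (m k).+1)%N := leq_trans ck (m'm k).
rewrite ck' (ck : (c < (m' k).+1)%N); case: eqP => [->|]; last by rewrite !andbF.
case: eqP => [->|]; last by rewrite !andbF.
by rewrite r0k0 (leq_trans r0k0 (m'm _)).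
Qed.

Lemma extends_pertl m m' (A : Param R L m) (B : Param R L m') (k0 : 'I_L) r0 c0 t :
  (m' k0 < c0)%N -> extends_net A B -> extends_net (pert A k0 r0 c0 t) B.
Proof.
move=> k0c0 AB k r c ck; rewrite mget_pert AB //.
case: (k =P k0) => [ek|]; case: (c =P c0) => [ec|]; rewrite ?andbF ?addr0 //.
by move: k0c0; rewrite -ec -ek ltnNge ck.
Qed.

End NetworkExtension.

Section Reduction.
Variables (R : realType) (L : nat) (n : nat -> nat).
Variables (hs : nat -> R -> R) (C : 'cV[R]_(n L) -> 'cV[R]_(n L) -> R).
Variable data : seq ('cV[R]_(n 0%N) * 'cV[R]_(n L)).

Lemma nred_le i : (nred L n i <= n i)%N.
Proof. by case: i => [|i] //=; case: eqP => [->|_] //; exact: geq_minl. Qed.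

Lemma mget_int (T : Param R L n) (k : 'I_L) r c : is_int T ->
  (nred L n k.+1 <= r)%N -> (c <= nred L n k)%N -> mget (T k) r c = 0.
Proof.
move=> Tint rk ck; have [/andP[rn cn]|] := boolP ((r < n k.+1) && (c < (n k).+1))%N.
  by rewrite (mget_ord _ (Ordinal rn) (Ordinal cn)) Tint.
exact: mget_out.
Qed.

Lemma extends_iota_red (B : Param R L (nred L n)) : extends_net (iota_red B) B.
Proof.
move=> k r c ck; rewrite (mget_mx _ _ (mget (B k))) ltnS (leq_trans ck (nred_le k)) andbT.
by case: ltnP => // nr; rewrite mget_out // ltnNge (leq_trans (nred_le _) nr).
Qed.

Lemma extends_q2 (T : ParamInt R L n) : extends_net (iota1 T) (q2 T).
Proof.
move=> k r c ck; rewrite (mget_mx _ _ (mget (proj1_sig T k))) ltnS ck andbT.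
by case: ltnP => // rk; rewrite mget_int //; exact: proj2_sig T.
Qed.

Let Lf := @loss R L n n hs C data.
Let Lred := @loss R L n (nred L n) hs C data.

Lemma q1_grad_iota1 (T : ParamInt R L n) :
  q1 (grad Lf (iota1 T)) = iota2 (grad Lred (q2 T)).
Proof.
apply: eq_sig_hprop => //=; apply: functional_extensionality_dep => k.
apply/matrixP => r c; rewrite !mxE.
case: ifP => [/andP[rk _]|]; first by rewrite mget_out // ltnNge rk.
have [ck|kc] := leqP c (nred L n k) => [/negbT|_].
- rewrite andbT -ltnNge => rk.
  rewrite (mget_ord _ (Ordinal rk) (Ordinal (ck : (c < (nred L n k).+1)%N))) mxE.
  congr derive1; apply: funext => t; apply: loss_extends => //.
  exact: extends_pert nred_le rk (extends_q2 T).
- have loss_const : (fun t => Lf (pert (iota1 T) k r c t)) = cst (Lred (q2 T)).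
    by apply: funext => t; apply: loss_extends => //; exact: extends_pertl kc (extends_q2 T).
  by rewrite loss_const derive1_cst mget_out // [(c < _)%N]ltnNge kc andbF.
Qed.

End Reduction.

Theorem lemma6 (R : realType) (L : nat) (n : nat -> nat)
  (hs : nat -> R -> R)
  (hs_pd : forall i, (1 <= i <= L)%N -> piecewise_differentiable (hs i))
  (C : 'cV[R]_(n L) -> 'cV[R]_(n L) -> R)
  (data : seq ('cV[R]_(n 0%N) * 'cV[R]_(n L)))
  (HL : forall A : Param R L n,
     param_differentiable (@loss R L n n hs C data) A)
  (HLred : forall B : Param R L (nred L n),
     param_differentiable (@loss R L n (nred L n) hs C data) B) :
  let Lf := @loss R L n n hs C data in
  let Lred := @loss R L n (nred L n) hs C data in
  [/\ (@iota_red R L n = @iota1 R L n \o @iota2 R L n),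
      Lf \o @iota_red R L n = Lred,
      (forall T : ParamInt R L n, Lf (iota1 T) = Lred (q2 T))
    & (forall T : ParamInt R L n,
         q1 (grad Lf (iota1 T)) = iota2 (grad Lred (q2 T)))].
Proof.
(* [grad] is defined entrywise by one-variable derivatives. *)
move=> Lf Lred; split=> //.
- by apply: funext => B; apply: loss_extends => //; exact: extends_iota_red.
- by move=> T; apply: loss_extends => //; exact: extends_q2.
- exact: q1_grad_iota1.
Qed.
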